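(* Let $G$, $\mathrm{b}$, $(w_{ij})$, the messages $m_{j\to i}(t)$ of Sync-BP, and the quantities $n_{j\to i}(t)$ be as in the context. Then for every edge $\{i,j\}$ of $G$ and every $t=0,1,2,\dots$, $n_{j\to i}(t)=m_{j\to i}(t)$.
   Context: Let $G=(V,E)$ be a finite undirected simple graph, $V=\{1,\dots,n\}$, with real edge weights $w_{ij}$ and positive integers $b_1,\dots,b_n$ with $\deg_G(i)\ge b_i+1$ for all $i$; $N(i)$ is the neighbour set of $i$. Sync-BP messages: $m_{i\to j}(0)=w_{ij}$ and for $t\ge1$, $m_{i\to j}(t)=w_{ij}-\big(b_i\text{-th smallest of }\{m_{\ell\to i}(t-1):\ell\in N(i)\setminus\{j\}\}\big)$, for each ordered pair with $\{i,j\}\in E$. Computation tree: for $i\in V$ and $t\ge0$, $T_i^t$ is the rooted labelled tree with levels $0,1,\dots,t+1$ defined by: the root (level 0) has label $i$; the root has $\deg_G(i)$ children whose labels are exactly the elements of $N(i)$; a node at level $1\le k\le t$ with label $s$ whose parent has label $r$ has children whose labels are exactly the elements of $N(s)\setminus\{r\}$; nodes at level $t+1$ are leaves. An edge between nodes labelled $a,c$ has weight $w_{ac}$. For a child $i_j$ of the root, $T^t_{i_j\to i}$ denotes the subtree consisting of the root edge $(i,i_j)$ together with $i_j$ and all its descendants. A perfect tree-$\mathrm{b}$-matching of such a tree is a set of its edges such that each non-leaf node with label $s$ (other than the root $i$ in the case of $T^t_{i_j\to i}$) is incident to exactly $b_s$ edges of the set. Let $W^+_{i_j\to i}(t)$ (resp.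 $W^-_{i_j\to i}(t)$) be the minimum weight of a perfect tree-$\mathrm{b}$-matching of $T^t_{i_j\to i}$ that contains (resp. does not contain) the root edge $(i,i_j)$, and $n_{i_j\to i}(t)=W^+_{i_j\to i}(t)-W^-_{i_j\to i}(t)$; this is well-defined for every edge $\{i,j\}$ of $G$ via $n_{j\to i}(t)$. *)

From HB Require Import structures.
From mathcomp Require Import all_boot all_order all_algebra.
Set Implicit Arguments. Unset Strict Implicit. Unset Printing Implicit Defensive.
Import Order.TTheory GRing.Theory Num.Theory.
Local Open Scope ring_scope.

Section SyncBP.
Variables (R : realFieldType) (T : finType) (e : rel T)
          (w : T -> T -> R) (b : T -> nat).

Definition deg (i : T) : nat := #|[pred l | e i l]|.

Definition kth_smallest (k : nat) (s : seq R) : R :=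
  nth 0 (sort <=%R s) k.-1.

(* Sync-BP messages: msg t i j = m_{i -> j}(t) *)
Fixpoint msg (t : nat) : T -> T -> R := fun i j =>
  match t with
  | 0 => w i j
  | t'.+1 => w i j -
      kth_smallest (b i) [seq msg t' l i | l <- enum T & e i l && (l != j)]
  end.

(* A node is encoded by the REVERSED sequence of labels
   on the path from the root to it: [:: x_k; x_(k-1); ...; x_0] with x_0 the
   root label.  Its label is the head, its parent's label the second item.
   Every non-root node is identified with the tree edge to its parent. *)
Definition children (r s : T) : seq T := [seq c <- enum T | e s c && (c != r)].

Definition child_nodes (p : seq T) : seq (seq T) :=
  if p is s :: r :: _ then [seq c :: p | c <- children r s] else [::].

Fixpoint below (k : nat) (p : seq T) : seq (seq T) :=
  match k with
  | 0 => [::]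
  | k'.+1 => flatten [seq q :: below k' q | q <- child_nodes p]
  end.

(* the edges (= non-root nodes) of T^t_{j -> i}: the root edge (i,j)
   (node [:: j; i], at level 1) and all nodes below it down to level t+1 *)
Definition subtree_edges (t : nat) (i j : T) : seq (seq T) :=
  [:: j; i] :: below t [:: j; i].

Definition edge_weight (p : seq T) : R :=
  if p is a :: c :: _ then w c a else 0.

(* a set of edges of the tree is represented by its indicator M *)
Definition tree_weight (t : nat) (i j : T) (M : seq T -> bool) : R :=
  \sum_(p <- subtree_edges t i j | M p) edge_weight p.

(* perfect tree-b-matching of T^t_{j -> i}: every non-leaf node other than
   the root i (i.e. every node at level 1..t, i.e. of path length <= t+1)
   with label s is incident to exactly b s edges of M (edge to its parent
   plus edges to its children). *)
Definition perfect_tree_bmatching (t : nat) (i j : T) (M : seq T -> bool) :=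
  forall p, p \in subtree_edges t i j -> (size p <= t.+1)%N ->
    (M p + count M (child_nodes p))%N = b (head j p).

Definition is_min_value (P : (seq T -> bool) -> Prop) (f : (seq T -> bool) -> R)
  (x : R) : Prop :=
  (exists M, P M /\ f M = x) /\ (forall M, P M -> x <= f M).

Definition is_Wplus (t : nat) (i j : T) (x : R) : Prop :=
  is_min_value (fun M => perfect_tree_bmatching t i j M /\ M [:: j; i])
               (tree_weight t i j) x.

Definition is_Wminus (t : nat) (i j : T) (x : R) : Prop :=
  is_min_value (fun M => perfect_tree_bmatching t i j M /\ ~~ M [:: j; i])
               (tree_weight t i j) x.

End SyncBP.

From HB Require Import structures.
From mathcomp Require Import all_boot all_order all_algebra.
From mathcomp Require Import zify ring.
From Stdlib Require Import ClassicalEpsilon.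
(* Fix the status of the edge from a tree node to its parent.  The remaining
   constraint at the node asks for exactly [b - status] of its child edges, and
   the subtrees hanging below the children are otherwise independent.  So if
   each child x has optimal weights W_x(in) and W_x(out), the optimum at the
   node is  sum_x W_x(out) + (sum of the [b - status] smallest W_x(in) - W_x(out)).
   Subtracting the two cases leaves w - (b-th smallest difference), which is
   exactly the Sync-BP update; induction on the depth concludes. *)

Set Implicit Arguments. Unset Strict Implicit. Unset Printing Implicit Defensive.
Import Order.TTheory GRing.Theory Num.Theory.
Local Open Scope ring_scope.

Section SmallestSum.
Variable R : realFieldType.

Definition smallest_sum (m : nat) (s : seq R) : R :=
  \sum_(z <- take m (sort <=%R s)) z.

Lemma sum_take_sorted_cons_le (x : R) (t : seq R) (m : nat) :
  sorted <=%R (x :: t) -> (m <= size t)%N ->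
  \sum_(z <- take m (x :: t)) z <= \sum_(z <- take m t) z.
Proof.
elim: t x m => [|y t IH] x [|m] //= /andP[le_xy sorted_yt] le_mt.
by rewrite !big_cons lerD // IH.
Qed.

Lemma sum_take_sorted_le_perm (t u v : seq R) :
  sorted <=%R t -> perm_eq t (u ++ v) ->
  \sum_(z <- take (size u) t) z <= \sum_(z <- u) z.
Proof.
elim: t u v => [|x t IH] u v sorted_t t_uv.
  by case: u t_uv => [|y u] /perm_size; rewrite ?big_nil.
have sorted_t' : sorted <=%R t by apply: path_sorted sorted_t.
have [xu | xNu] := boolP (x \in u).
  have u_x := perm_to_rem xu.
  have t_uv' : perm_eq t (rem x u ++ v).
    by rewrite -(perm_cons x) (perm_trans t_uv) // -cat_cons perm_cat2r.
  rewrite (perm_big _ u_x) (perm_size u_x) /= !big_cons lerD2l.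
  exact: IH t_uv'.
have xv : x \in v.
  by move: (mem_head x t); rewrite (perm_mem t_uv) mem_cat (negbTE xNu).
have t_uv' : perm_eq t (u ++ rem x v).
  rewrite -(perm_cons x) (perm_trans t_uv) // perm_sym -cat1s perm_catCA.
  by rewrite perm_cat2l perm_sym perm_to_rem.
apply: le_trans (IH _ _ sorted_t' t_uv').
apply: sum_take_sorted_cons_le => //.
by rewrite (perm_size t_uv') size_cat leq_addr.
Qed.

Lemma smallest_sumS (m : nat) (s : seq R) : (m < size s)%N ->
  smallest_sum m.+1 s = smallest_sum m s + kth_smallest m.+1 s.
Proof.
by move=> lt_ms; rewrite /smallest_sum (take_nth 0) ?size_sort // -cats1 big_cat big_seq1.
Qed.

End SmallestSum.

Section Selection.
Variables (R : realFieldType) (T : eqType).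
Implicit Types (xs : seq T) (g : T -> R) (sel : pred T).

Lemma smallest_sum_le_sum_sel xs g sel :
  smallest_sum (count sel xs) (map g xs) <= \sum_(x <- xs | sel x) g x.
Proof.
rewrite -big_filter -(big_map g predT id) -size_filter -(size_map g).
apply: (sum_take_sorted_le_perm (v := map g (filter (predC sel) xs))).
  exact/sort_sorted/le_total.
by rewrite perm_sort -map_cat perm_map // perm_sym perm_filterC.
Qed.

Lemma smallest_sum_attained xs g (m : nat) : uniq xs -> (m <= size xs)%N ->
  exists sel, count sel xs = m /\
              \sum_(x <- xs | sel x) g x = smallest_sum m (map g xs).
Proof.
move=> uniq_xs le_m_xs; set ys := take m (sort (relpre g <=%R) xs).
have xs_ys : perm_eq (filter (mem ys) xs) ys.
  apply: uniq_perm; first by rewrite filter_uniq.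
    by rewrite take_uniq // sort_uniq.
  move=> x; rewrite mem_filter andb_idr // => /mem_take.
  by rewrite mem_sort.
exists (mem ys); split.
  by rewrite -size_filter (perm_size xs_ys) size_take size_sort; case: ltngtP le_m_xs.
by rewrite -big_filter (perm_big _ xs_ys) /smallest_sum sort_map -map_take big_map.
Qed.

Definition min_choice_cost xs (W : T -> bool -> R) (m : nat) : R :=
  \sum_(x <- xs) W x false +
  smallest_sum m [seq W x true - W x false | x <- xs].

Lemma sum_choiceE xs (W : T -> bool -> R) sel :
  \sum_(x <- xs) W x (sel x) =
  \sum_(x <- xs) W x false + \sum_(x <- xs | sel x) (W x true - W x false).
Proof.
rewrite [X in _ + X]big_mkcond -big_split; apply: eq_bigr => x _ /=.
by case: (sel x); rewrite ?addr0 // addrCA subrr addr0.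
Qed.

Lemma min_choice_cost_le xs (W : T -> bool -> R) sel :
  min_choice_cost xs W (count sel xs) <= \sum_(x <- xs) W x (sel x).
Proof. by rewrite sum_choiceE lerD2l smallest_sum_le_sum_sel. Qed.

Lemma min_choice_cost_attained xs (W : T -> bool -> R) (m : nat) :
  uniq xs -> (m <= size xs)%N ->
  exists sel, count sel xs = m /\
              \sum_(x <- xs) W x (sel x) = min_choice_cost xs W m.
Proof.
move=> uniq_xs le_m_xs.
have [sel [count_sel sum_sel]] :=
  smallest_sum_attained (fun x => W x true - W x false) uniq_xs le_m_xs.
by exists sel; rewrite sum_choiceE sum_sel.
Qed.

End Selection.

Section ComputationTree.
Variables (R : realFieldType) (T : finType) (e : rel T)
          (w : T -> T -> R) (b : T -> nat).

(* [perfect_below k p M] and [weight_below k p M] only look at p and its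
   descendants fewer than k (resp. at most k) levels below it, each node
   standing for the edge to its parent. *)
Fixpoint perfect_below (k : nat) (p : seq T) (M : seq T -> bool) : Prop :=
  match k with
  | 0 => True
  | k'.+1 =>
    (M p + count M (child_nodes e p))%N = (if p is s :: _ then b s else 0%N) /\
    forall q, q \in child_nodes e p -> perfect_below k' q M
  end.

Fixpoint weight_below (k : nat) (p : seq T) (M : seq T -> bool) : R :=
  (if M p then edge_weight w p else 0) +
  if k is k'.+1 then \sum_(q <- child_nodes e p) weight_below k' q M else 0.

Definition subtree_nodes (k : nat) (p : seq T) : seq (seq T) := p :: below e k p.

Lemma child_nodes_cons p q : q \in child_nodes e p -> exists c, q = c :: p.
Proof. by case: p => [|s [|r p]] //= /mapP[c _ ->]; exists c. Qed.

Lemma subtree_nodes_self k p : p \in subtree_nodes k p.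
Proof. exact: mem_head. Qed.

Lemma mem_subtree_nodesS k p r : (r \in subtree_nodes k.+1 p) =
  (r == p) || has (fun q => r \in subtree_nodes k q) (child_nodes e p).
Proof.
rewrite in_cons; congr (_ || _); apply/flattenP/hasP.
  by case=> s /mapP[q qin ->] rin; exists q.
by case=> q qin rin; exists (q :: below e k q) => //; apply: map_f.
Qed.

Lemma subtree_nodes_child k p q r :
  q \in child_nodes e p -> r \in subtree_nodes k q -> r \in subtree_nodes k.+1 p.
Proof. by move=> qin rin; rewrite mem_subtree_nodesS; apply/orP; right; apply/hasP; exists q. Qed.

Lemma subtree_nodes_suffix k p r : r \in subtree_nodes k p -> exists s, r = s ++ p.
Proof.
elim: k p r => [|k IH] p r.
  by rewrite inE => /eqP ->; exists [::].
rewrite mem_subtree_nodesS => /orP[/eqP ->|/hasP[q qin /IH[s ->]]].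
  by exists [::].
by have [c ->] := child_nodes_cons qin; exists (rcons s c); rewrite cat_rcons.
Qed.

Lemma perfect_below_eq_in k p M M' : {in subtree_nodes k p, M =1 M'} ->
  perfect_below k p M -> perfect_below k p M'.
Proof.
elim: k p => [|k IH] p eqM //= [count_M perf_child].
have eq_count : count M (child_nodes e p) = count M' (child_nodes e p).
  by apply: eq_in_count => q qin; apply/eqM/(subtree_nodes_child qin (subtree_nodes_self _ _)).
rewrite -eq_count -eqM ?subtree_nodes_self //; split=> // q qin.
by apply: IH (perf_child q qin) => r rin; apply/eqM/(subtree_nodes_child qin rin).
Qed.

Lemma weight_below_eq_in k p M M' : {in subtree_nodes k p, M =1 M'} ->
  weight_below k p M = weight_below k p M'.
Proof.
elim: k p => [|k IH] p eqM /=; rewrite eqM ?subtree_nodes_self //.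
congr (_ + _); apply: eq_big_seq => q qin.
by apply: IH => r rin; apply/eqM/(subtree_nodes_child qin rin).
Qed.

Lemma weight_belowE k p M :
  weight_below k p M = \sum_(r <- subtree_nodes k p | M r) edge_weight w r.
Proof.
elim: k p => [|k IH] p.
  by rewrite /subtree_nodes /= big_mkcond big_seq1 /=; case: (M p); rewrite addr0.
rewrite big_cons /= big_flatten big_map (eq_bigr _ (fun q _ => IH q)).
by case: (M p); rewrite ?add0r.
Qed.

Lemma perfect_belowE k p (M : seq T -> bool) (d : T) : p != [::] ->
  perfect_below k p M <->
  (forall r, r \in subtree_nodes k p -> (size r < size p + k)%N ->
     (M r + count M (child_nodes e r))%N = b (head d r)).
Proof.
elim: k p => [|k IH] p p_nil.
  by split=> // _ r /subtree_nodes_suffix[s ->]; rewrite size_cat addn0 ltnNge leq_addl.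
have b_head : b (head d p) = (if p is s :: _ then b s else 0%N) by case: p p_nil.
split=> [[perf_p perf_child] r | perf].
  rewrite mem_subtree_nodesS => /orP[/eqP -> _|/hasP[q qin rin] lt_r].
    by rewrite b_head.
  have [c qE] := child_nodes_cons qin.
  have perf_q : perfect_below k q M := perf_child q qin.
  move/IH: perf_q; rewrite qE => /(_ isT r); apply; first by rewrite -qE.
  by move: lt_r; rewrite /= addSnnS.
split; first by rewrite -b_head; apply: perf; rewrite ?subtree_nodes_self // addnS ltnS leq_addr.
move=> q qin; have [c qE] := child_nodes_cons qin.
apply/IH => [|r rin]; first by rewrite qE.
move=> lt_r; apply: perf; first exact: subtree_nodes_child qin rin.
by move: lt_r; rewrite qE /= addSnnS.
Qed.

(* A node strictly below p has the form s ++ x :: p, and is then glued from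
   the matching chosen for the child x. *)
Definition glue (p : seq T) (top : bool) (F : T -> seq T -> bool) (r : seq T) : bool :=
  if r == p then top
  else if drop (size r - (size p).+1) r is x :: _ then F x r else false.

Lemma glue_child k p top F x r :
  r \in subtree_nodes k (x :: p) -> glue p top F r = F x r.
Proof.
move=> /subtree_nodes_suffix[s ->]; rewrite /glue size_cat /=.
have -> : (s ++ x :: p == p) = false.
  by apply/negbTE/eqP => /(congr1 size); rewrite size_cat /=; lia.
by rewrite addnS subSS addnK drop_size_cat.
Qed.

End ComputationTree.

Section SyncBP.
Variables (R : realFieldType) (T : finType) (e : rel T)
          (w : T -> T -> R) (b : T -> nat).
Hypotheses (e_sym : symmetric e) (w_sym : forall i j, w i j = w j i)
  (b_pos : forall i, (0 < b i)%N) (deg_ge : forall i, (b i < deg e i)%N).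

Definition is_opt_below (k : nat) (p : seq T) (top : bool) (x : R) : Prop :=
  is_min_value (fun M => perfect_below e b k p M /\ M p = top)
               (weight_below e w k p) x.

Lemma size_children c a : e c a -> size (children e c a) = (deg e a).-1.
Proof.
move=> e_ca; have ac : c \in filter (e a) (enum T) by rewrite mem_filter e_sym e_ca mem_enum.
have -> : deg e a = size (filter (e a) (enum T)).
  by rewrite /deg cardE /enum_mem -enumT /= -filter_predI; apply/congr1/eq_filter => x /=; rewrite andbT.
rewrite -(size_rem ac) rem_filter; last by rewrite filter_uniq // enum_uniq.
by rewrite -filter_predI; apply/congr1/eq_filter => x /=; rewrite andbC.
Qed.

Section Step.
Variables (k : nat) (a c : T) (rest : seq T).
Hypothesis e_ca : e c a.
Let p := a :: c :: rest.
Let xs := children e c a.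
Variable W : T -> bool -> R.
Hypothesis W_opt : forall x top, x \in xs -> is_opt_below k (x :: p) top (W x top).

Definition node_cost (top : bool) : R :=
  (if top then w c a else 0) + min_choice_cost xs W (b a - top).

Lemma weight_below_node M : weight_below e w k.+1 p M =
  (if M p then w c a else 0) + \sum_(x <- xs) weight_below e w k (x :: p) M.
Proof. by rewrite /= big_map. Qed.

Lemma perfect_below_node M : perfect_below e b k.+1 p M <->
  (M p + count (fun x => M (x :: p)) xs)%N = b a /\
  forall x, x \in xs -> perfect_below e b k (x :: p) M.
Proof.
rewrite /= count_map; split=> -[count_M perf_child]; split=> //.
  by move=> x xin; apply: perf_child; exact: map_f.
by move=> _ /mapP[x xin ->]; exact: perf_child.
Qed.

Lemma node_cost_le M top : perfect_below e b k.+1 p M -> M p = top ->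
  node_cost top <= weight_below e w k.+1 p M.
Proof.
move=> /perfect_below_node[count_M perf_child] Mp.
rewrite weight_below_node Mp lerD2l.
have -> : (b a - top)%N = count (fun x => M (x :: p)) xs by rewrite -count_M Mp addKn.
apply: le_trans (min_choice_cost_le _ _ _) _.
rewrite big_seq [X in _ <= X]big_seq; apply: ler_sum => x xin.
by apply: (W_opt _ xin).2; split; [apply: perf_child | ].
Qed.

Lemma node_cost_attained top : exists M,
  [/\ perfect_below e b k.+1 p M, M p = top & weight_below e w k.+1 p M = node_cost top].
Proof.
have le_b_xs : (b a - top <= size xs)%N.
  by rewrite size_children //; have := deg_ge a; lia.
have [sel [count_sel sum_sel]] :=
  min_choice_cost_attained W (filter_uniq _ (enum_uniq T)) le_b_xs.
have /choice[F F_opt] : forall x, exists Fx : seq T -> bool, x \in xs ->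
    [/\ perfect_below e b k (x :: p) Fx, Fx (x :: p) = sel x
      & weight_below e w k (x :: p) Fx = W x (sel x)].
  move=> x; have [xin|] := boolP (x \in xs); last by exists xpred0.
  by have [[Fx [[perf_Fx Fx_top] weight_Fx]] _] := W_opt (sel x) xin; exists Fx.
pose M := glue p top F.
have M_child x : {in subtree_nodes e k (x :: p), F x =1 M}.
  by move=> r rin; rewrite /M (glue_child _ _ rin).
have Mp : M p = top by rewrite /M /glue eqxx.
exists M; split=> //.
  apply/perfect_below_node; split=> [|x xin].
    have -> : count (fun x => M (x :: p)) xs = count sel xs.
      apply: eq_in_count => x xin /=.
      by rewrite -(M_child x) ?subtree_nodes_self //; have [] := F_opt x xin.
    rewrite Mp count_sel; apply: subnKC; apply: leq_trans (leq_b1 top) (b_pos a).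
  by apply: (perfect_below_eq_in (M_child x)); have [] := F_opt x xin.
rewrite weight_below_node Mp /node_cost -sum_sel; congr (_ + _); apply: eq_big_seq => x xin.
by rewrite -(weight_below_eq_in w (M_child x)); have [] := F_opt x xin.
Qed.

Lemma node_cost_opt top : is_opt_below k.+1 p top (node_cost top).
Proof.
split; last by move=> M [perf_M Mp]; apply: node_cost_le.
by have [M [perf_M Mp weight_M]] := node_cost_attained top; exists M.
Qed.

Lemma node_cost_sub : node_cost true - node_cost false =
  w c a - kth_smallest (b a) [seq W x true - W x false | x <- xs].
Proof.
have lt_b_xs : ((b a).-1 < size xs)%N.
  by rewrite size_children //; have := deg_ge a; have := b_pos a; lia.
rewrite /node_cost /min_choice_cost subn1 subn0 -{2}(prednK (b_pos a)) smallest_sumS.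
  by rewrite (prednK (b_pos a)); ring.
by rewrite size_map.
Qed.

End Step.

Lemma is_opt_below_msg k a c rest : e c a -> exists Wt : bool -> R,
  (forall top, is_opt_below k [:: a, c & rest] top (Wt top)) /\
  Wt true - Wt false = msg e w b k a c.
Proof.
elim: k a c rest => [|k IH] a c rest e_ca.
  exists (fun top : bool => if top then w c a else 0); split; last by rewrite subr0 w_sym.
  move=> top; split; first by exists (fun _ => top); rewrite /= addr0; case: top.
  by move=> M [_ <-]; rewrite /= addr0.
set p := [:: a, c & rest].
have /choice[W W_spec] : forall x, exists Wx : bool -> R, e a x ->
    (forall top, is_opt_below k (x :: p) top (Wx top)) /\
    Wx true - Wx false = msg e w b k x a.
  move=> x; have [e_ax|] := boolP (e a x); last by exists (fun _ => 0).
  by have [Wx] := IH x a (c :: rest) e_ax; exists Wx.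
have e_child x : x \in children e c a -> e a x by rewrite mem_filter => /andP[/andP[]].
exists (node_cost a c W); split.
  by move=> top; apply: node_cost_opt => // x top' /e_child /W_spec[].
rewrite node_cost_sub //= (w_sym a c); congr (_ - kth_smallest _ _).
by apply/eq_in_map => x /e_child /W_spec[].
Qed.

End SyncBP.

Lemma perfect_tree_bmatchingE (T : finType) (e : rel T) (b : T -> nat) t i j M :
  perfect_tree_bmatching e b t i j M <-> perfect_below e b t [:: j; i] M.
Proof. by rewrite (perfect_belowE e b t M j). Qed.

Lemma tree_weightE (R : realFieldType) (T : finType) (e : rel T) (w : T -> T -> R) t i j M :
  tree_weight e w t i j M = weight_below e w t [:: j; i] M.
Proof. by rewrite weight_belowE. Qed.

Lemma is_min_value_ext (R : realFieldType) (T : finType)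
    (P P' : (seq T -> bool) -> Prop) (f f' : (seq T -> bool) -> R) x :
  is_min_value P f x -> (forall M, P M <-> P' M) -> f =1 f' -> is_min_value P' f' x.
Proof.
move=> [[M [PM <-]] min_x] PP' ff'; split; first by exists M; split; [apply/PP' | rewrite ff'].
by move=> M' P'M; rewrite -ff'; apply/min_x/PP'.
Qed.

Theorem lemma1 (R : realFieldType) (T : finType) (e : rel T)
  (w : T -> T -> R) (b : T -> nat)
  (e_sym : symmetric e) (e_irr : irreflexive e)
  (w_sym : forall i j, w i j = w j i)
  (b_pos : forall i, (0 < b i)%N)
  (deg_ge : forall i, (b i < deg e i)%N) :
  forall (i j : T) (t : nat), e i j ->
    exists Wp Wm : R,
      is_Wplus e w b t i j Wp /\ is_Wminus e w b t i j Wm /\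
      Wp - Wm = msg e w b t j i.
Proof.
move=> i j t e_ij.
have [Wt [Wt_opt Wt_sub]] := is_opt_below_msg e_sym w_sym b_pos deg_ge t [::] e_ij.
exists (Wt true), (Wt false); split; [|split] => //.
  apply: (is_min_value_ext (Wt_opt true)) => M; last by rewrite tree_weightE.
  by rewrite perfect_tree_bmatchingE.
apply: (is_min_value_ext (Wt_opt false)) => M; last by rewrite tree_weightE.
rewrite perfect_tree_bmatchingE; split=> -[perf_M Mp]; split=> //.
  exact: negbT.
exact: negbTE.
Qed.
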